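(* Let $\mathbb{K}\in\{\mathbb{C},\mathbb{R}\}$, let $f=(f_1,f_2):\mathbb{K}^2\to\mathbb{K}^2$ be a dominant polynomial map whose components have non-zero constant terms, and let $\Gamma$ be an edge of $A=\mathsf{NP}(f_1)\oplus\mathsf{NP}(f_2)$. Then the set $\mathtt{TF}_{\mathbb{K}}(\Gamma)$ does not depend on the choice of $U\in\mathcal{T}_\Gamma$ used in its definition: for any $U,U'\in\mathcal{T}_\Gamma$, the sets $\mathtt{TF}_{\mathbb{K}}(\Gamma)$ defined using $\overline{U}$ and using $\overline{U'}$ coincide.
   Context: Standing setting. $\mathbb{K}^*=\mathbb{K}\setminus\{0\}$. $f=(f_1,f_2)$ with $f_i\in\mathbb{K}[x_1,x_2]$ is dominant and $f_1,f_2$ have non-zero constant terms. The Newton polytope $\mathsf{NP}(P)$ of $P=\sum c_a x^a$ is the convex hull of $\{a: c_a\neq0\}$. $A_i=\mathsf{NP}(f_i)$, $A=A_1\oplus A_2$. The face of a polygon $P$ supported by nonzero $\alpha\in\mathbb{R}^2$ is the set of minimizers of $\langle\alpha,\cdot\rangle$ on $P$. An edge $\Gamma$ of $A$ is a 1-dimensional face; with $\alpha$ supporting it, $\Gamma=\Gamma_1\oplus\Gamma_2$ where $\Gamma_i$ is the face of $A_i$ supported by $\alpha$. $\Gamma$-toric transformations. Let $a_1$ be a vertex of $\Gamma$ of minimal Euclidean norm, $v$ the primitive integer vector from $a_1$ along $\Gamma$, and $w\in\mathbb{Z}^2$ such that $(v,w)$ is a basis of $\mathbb{Z}^2$ and $A-a_1\subset\{b_1v+b_2w:b_1,b_2\ge0\}$.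 With $T$ the matrix with rows $v,w$, put $U=(T^{-1})^\top$; $\mathcal{T}_\Gamma$ is the set of all such $U$. $U$ maps $\sum c_ax^a$ to $\sum c_a z^{Ua}$. With $\gamma_i$ the vertices of $\Gamma_i$ such that $\gamma_1+\gamma_2=a_1$, set $\overline{U}(f-y):=\big(U(x^{-\gamma_1}(f_1-y_1)),U(x^{-\gamma_2}(f_2-y_2))\big)\in\mathbb{K}[z_1,z_2]^2$. $\mathtt{T}$-multiplicity sets. $\mathrm{Sol}_{\mathbb{K}}(\Gamma)$ is the set of $\rho\in\mathbb{K}^*$ such that $(\rho,0)$ is a common zero of $\overline{U}(f-\tilde y)$ for some $\tilde y\in\mathbb{K}^2$. For $\rho\in\mathrm{Sol}_{\mathbb{K}}(\Gamma)$, $\mathtt{TF}^{\rho}_{\mathbb{K}}(\Gamma)$ is the Euclidean closure of the set of $y\in\mathbb{K}^2$ such that $\overline{U}(f-y)(\rho,0)=0$ and there exist sequences $\varrho_k\in(\mathbb{K}^* )^2$, $y_k\in\mathbb{K}^2$ with $\varrho_k\to(\rho,0)$, $y_k\to y$ and $\overline{U}(f-y_k)(\varrho_k)=0$. Finally $\mathtt{TF}_{\mathbb{K}}(\Gamma)=\bigcup_{\rho\in\mathrm{Sol}_{\mathbb{K}}(\Gamma)}\mathtt{TF}^{\rho}_{\mathbb{K}}(\Gamma)$. *)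

From HB Require Import structures.
From mathcomp Require Import all_boot all_order all_algebra.
From mathcomp Require Import reals complex.
Set Implicit Arguments. Unset Strict Implicit. Unset Printing Implicit Defensive.
Import Order.TTheory GRing.Theory Num.Theory.
Local Open Scope ring_scope.

Definition Kfield (R : realType) (isC : bool) : numFieldType :=
  if isC then (R[i] : numFieldType) else (R : numFieldType).

Section Defs.
Variable K : numFieldType.

(* p : {poly {poly K}} encodes sum_(i,j) c_(i,j) x1^i x2^j with
   c_(i,j) = p`_j`_i  (outer variable = x2, inner variable = x1). *)
Definition coef2 (p : {poly {poly K}}) (a : nat * nat) : K := p`_a.2`_a.1.

Definition eval2 (p : {poly {poly K}}) (x : K * K) : K := (p.[x.2%:P]).[x.1].

(* f = (f1,f2) : K^2 -> K^2 is dominant: its image is Zariski dense, i.e. no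
   nonzero polynomial vanishes on the image. *)
Definition dominant (f1 f2 : {poly {poly K}}) : Prop :=
  forall g : {poly {poly K}}, g != 0 ->
    exists x : K * K, eval2 g (eval2 f1 x, eval2 f2 x) != 0.

Definition cvgK (u : nat -> K) (l : K) : Prop :=
  forall e : K, 0 < e -> exists N : nat, forall n : nat, (N <= n)%N -> `|u n - l| < e.

Definition closure2 (S : K * K -> Prop) (y : K * K) : Prop :=
  forall e : K, 0 < e -> exists s, S s /\ `|s.1 - y.1| < e /\ `|s.2 - y.2| < e.

Definition Uapp (U : 'M[int]_2) (a : int * int) : int * int :=
  (U 0 0 * a.1 + U 0 1 * a.2, U 1 0 * a.1 + U 1 1 * a.2).

(* Evaluation at z of  U(x^{-g} (p - y)) = sum_a c_a z^{U(a - g)},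
   where c_a are the coefficients of p - y. *)
Definition Ubar_eval (U : 'M[int]_2) (g : nat * nat) (p : {poly {poly K}})
    (y : K) (z : K * K) : K :=
  let q := p - (y%:P)%:P in
  \sum_(j < size q) \sum_(i < size q`_j)
     q`_j`_i * (let e := Uapp U ((i%:Z - g.1%:Z), (j%:Z - g.2%:Z)) in
                z.1 ^ e.1 * z.2 ^ e.2).

Definition Ubar_zero (U : 'M[int]_2) (g1 g2 : nat * nat)
    (f1 f2 : {poly {poly K}}) (y : K * K) (z : K * K) : Prop :=
  Ubar_eval U g1 f1 y.1 z = 0 /\ Ubar_eval U g2 f2 y.2 z = 0.

Definition Sol (U : 'M[int]_2) g1 g2 f1 f2 (rho : K) : Prop :=
  rho != 0 /\ exists yt : K * K, Ubar_zero U g1 g2 f1 f2 yt (rho, 0).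

Definition TFrho (U : 'M[int]_2) g1 g2 f1 f2 (rho : K) : K * K -> Prop :=
  closure2 (fun y => Ubar_zero U g1 g2 f1 f2 y (rho, 0) /\
    exists (vr : nat -> K * K) (ys : nat -> K * K),
      (forall k, (vr k).1 != 0 /\ (vr k).2 != 0) /\
      cvgK (fun k => (vr k).1) rho /\ cvgK (fun k => (vr k).2) 0 /\
      cvgK (fun k => (ys k).1) y.1 /\ cvgK (fun k => (ys k).2) y.2 /\
      (forall k, Ubar_zero U g1 g2 f1 f2 (ys k) (vr k))).

Definition TF (U : 'M[int]_2) g1 g2 f1 f2 (y : K * K) : Prop :=
  exists rho, Sol U g1 g2 f1 f2 rho /\ TFrho U g1 g2 f1 f2 rho y.

End Defs.

Section Geometry.
Variable R : realType.
Local Notation pt := (R * R)%type.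

Definition dot (a b : pt) : R := a.1 * b.1 + a.2 * b.2.
Definition emb (a : nat * nat) : pt := (a.1%:R, a.2%:R).
Definition embZ (a : int * int) : pt := (a.1%:~R, a.2%:~R).

Definition conv (S : pt -> Prop) (x : pt) : Prop :=
  exists (n : nat) (l : 'I_n -> R) (p : 'I_n -> pt),
    (forall i, 0 <= l i) /\ \sum_i l i = 1 /\ (forall i, S (p i)) /\
    x = (\sum_i l i * (p i).1, \sum_i l i * (p i).2).

Definition NP (K : numFieldType) (p : {poly {poly K}}) : pt -> Prop :=
  conv (fun x => exists a, coef2 p a != 0 /\ x = emb a).

Definition msum (P Q : pt -> Prop) (x : pt) : Prop :=
  exists p q, P p /\ Q q /\ x = (p.1 + q.1, p.2 + q.2).

Definition face (P : pt -> Prop) (alpha : pt) (x : pt) : Prop :=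
  P x /\ forall y, P y -> dot alpha x <= dot alpha y.

Definition is_edge (P : pt -> Prop) (alpha : pt) : Prop :=
  alpha != (0, 0) /\ exists x y, face P alpha x /\ face P alpha y /\ x <> y.

Definition is_vertex (P : pt -> Prop) (x : pt) : Prop :=
  P x /\ forall y z (t : R), P y -> P z -> 0 < t < 1 ->
    x = (t * y.1 + (1 - t) * z.1, t * y.2 + (1 - t) * z.2) -> y = z.

Definition norm2 (x : pt) : R := x.1 ^+ 2 + x.2 ^+ 2.

Definition Tmat (v w : int * int) : 'M[int]_2 :=
  \matrix_(i < 2, j < 2)
     (if i == 0 then (if j == 0 then v.1 else v.2)
      else (if j == 0 then w.1 else w.2)).

Definition TGamma (A Gamma : pt -> Prop) (a1 : nat * nat) (U : 'M[int]_2) : Prop :=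
  exists v w : int * int,
    gcdz v.1 v.2 = 1 /\
    (exists t : R, 0 < t /\
       Gamma ((emb a1).1 + t * (embZ v).1, (emb a1).2 + t * (embZ v).2)) /\
    (v.1 * w.2 - v.2 * w.1 = 1 \/ v.1 * w.2 - v.2 * w.1 = -1) /\
    (forall x, A x -> exists b1 b2 : R, 0 <= b1 /\ 0 <= b2 /\
       x.1 - (emb a1).1 = b1 * (embZ v).1 + b2 * (embZ w).1 /\
       x.2 - (emb a1).2 = b1 * (embZ v).2 + b2 * (embZ w).2) /\
    U = (invmx (Tmat v w))^T.

End Geometry.

From HB Require Import structures.
From mathcomp Require Import all_boot all_order all_algebra.
From mathcomp Require Import reals complex ring lra zify.
Import Order.TTheory GRing.Theory Num.Theory.
Local Open Scope ring_scope.
Set Implicit Arguments. Unset Strict Implicit.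

(* Write U = (T^-1)^T, T having rows v and w; then U d is the coordinate
   vector of d in the basis (v, w) (Uapp_coords).
   1. The primitive vector v is determined by Gamma and a1: it is orthogonal
      to alpha, primitive, and points from the vertex a1 into Gamma
      (edge_direction_unique).  So U, U' in T_Gamma only differ in the second
      basis vector, w versus w'.
   2. Writing w = p v + r w', unimodularity forces r = 1 or -1, and for an
      exponent d lying in the cones spanned by both bases the second
      coordinates are nonnegative, so U' d = (e1 + p e2, e2) where
      (e1, e2) = U d (Uapp_shear).  Every exponent a - gamma_i of
      Ubar(f_i - y) is a point of A - a1, hence lies in both cones
      (exponents_in_cone); here the nonzero constant terms ensure that
      subtracting y creates no new monomial.
   3. Hence Ubar'(f - y)(z1, z2) = Ubar(f - y)(z1, z2 z1^p) when z1 != 0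
      (Ubar_shear).  This change of variables fixes every point (rho, 0),
      preserves (K^* )^2 and is continuous at (rho, 0), so it carries TF
      computed with U' into TF computed with U (TF_transfer).  Applying this
      in both directions proves the theorem. *)

Definition det2 (R : pzRingType) (v w : R * R) : R := v.1 * w.2 - v.2 * w.1.

Definition lincomb (R : pzRingType) (e1 e2 : R) (v w : R * R) : R * R :=
  (e1 * v.1 + e2 * w.1, e1 * v.2 + e2 * w.2).

Definition unimodular (v w : int * int) : Prop := det2 v w = 1 \/ det2 v w = -1.

Lemma unimodular_neq0 (v w : int * int) : unimodular v w -> det2 v w != 0.
Proof. by case=> ->. Qed.

Lemma coords_unique (R : idomainType) (v w : R * R) (a1 a2 b1 b2 : R) :
  det2 v w != 0 -> lincomb a1 a2 v w = lincomb b1 b2 v w -> a1 = b1 /\ a2 = b2.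
Proof.
move=> hd [h1 h2].
have e1 : (a1 - b1) * det2 v w =
  w.2 * (a1 * v.1 + a2 * w.1 - (b1 * v.1 + b2 * w.1))
  - w.1 * (a1 * v.2 + a2 * w.2 - (b1 * v.2 + b2 * w.2)) by rewrite /det2; ring.
have e2 : (a2 - b2) * det2 v w =
  v.1 * (a1 * v.2 + a2 * w.2 - (b1 * v.2 + b2 * w.2))
  - v.2 * (a1 * v.1 + a2 * w.1 - (b1 * v.1 + b2 * w.1)) by rewrite /det2; ring.
rewrite h1 h2 !subrr !mulr0 subrr in e1 e2.
move/eqP: e1; move/eqP: e2; rewrite !mulf_eq0 (negbTE hd) !orbF !subr_eq0.
by move=> /eqP -> /eqP ->.
Qed.

(* For U = (T^-1)^T with T of rows v, w, the vector U d lists the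
   coordinates of d in the basis (v, w); T^-1 is the adjugate of T scaled by
   det T = det T^-1. *)
Lemma Uapp_coords (v w d : int * int) (U : 'M[int]_2) :
  unimodular v w -> U = (invmx (Tmat v w))^T ->
  d = lincomb (Uapp U d).1 (Uapp U d).2 v w.
Proof.
move=> hdet ->.
have ss : det2 v w * det2 v w = 1 by case: hdet => ->.
pose B : 'M[int]_2 := \matrix_(i < 2, j < 2)
  (if i == 0 then (if j == 0 then det2 v w * w.2 else - det2 v w * v.2)
   else (if j == 0 then - det2 v w * w.1 else det2 v w * v.1)).
have TB : Tmat v w *m B = 1%:M.
  apply/matrixP => i j; rewrite !mxE !big_ord_recr big_ord0 /= add0r !mxE /=.
  by case: i => [[|[|//]] ?]; case: j => [[|[|//]] ?] /=;
    rewrite -ss /det2; ring.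
have [uT _] := mulmx1_unit TB.
have -> : invmx (Tmat v w) = B by rewrite -[B](mulKmx uT) TB mulmx1.
rewrite /Uapp /lincomb !mxE /= [d in LHS]surjective_pairing.
by congr pair; rewrite -[LHS]mul1r -ss /det2; ring.
Qed.

Lemma Uapp_coordsE (v w d : int * int) (U : 'M[int]_2) (e1 e2 : int) :
  unimodular v w -> U = (invmx (Tmat v w))^T ->
  d = lincomb e1 e2 v w -> Uapp U d = (e1, e2).
Proof.
move=> uw eU hd.
have [-> ->] := coords_unique (unimodular_neq0 uw) (etrans (esym hd) (Uapp_coords d uw eU)).
exact: surjective_pairing.
Qed.

Definition shear (k : int) (e : int * int) : int * int := (e.1 + k * e.2, e.2).

Section Geometry.
Variable R : realType.

Definition in_cone (v w : int * int) (x : R * R) : Prop :=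
  exists b1 b2 : R, 0 <= b1 /\ 0 <= b2 /\
    x.1 = b1 * (embZ R v).1 + b2 * (embZ R w).1 /\
    x.2 = b1 * (embZ R v).2 + b2 * (embZ R w).2.

Lemma embZ_lincomb (e1 e2 : int) (v w : int * int) :
  embZ R (lincomb e1 e2 v w) = lincomb e1%:~R e2%:~R (embZ R v) (embZ R w).
Proof. by rewrite /embZ /lincomb /= !rmorphD !rmorphM. Qed.

Lemma det2_embZ (v w : int * int) : det2 (embZ R v) (embZ R w) = (det2 v w)%:~R.
Proof. by rewrite /det2 /embZ /= rmorphB !rmorphM. Qed.

Lemma cone_coord_ge0 (v w d : int * int) (e1 e2 : int) :
  unimodular v w -> d = lincomb e1 e2 v w -> in_cone v w (embZ R d) -> 0 <= e2.
Proof.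
move=> uw hd [b1 [b2 [_ [b2_ge0 [h1 h2]]]]].
have dnz : det2 (embZ R v) (embZ R w) != 0.
  by rewrite det2_embZ intr_eq0 unimodular_neq0.
have hb : lincomb e1%:~R e2%:~R (embZ R v) (embZ R w) = lincomb b1 b2 (embZ R v) (embZ R w).
  by rewrite -embZ_lincomb -hd /lincomb -h1 -h2 -surjective_pairing.
have [_ e2b] := coords_unique dnz hb.
by rewrite -(ler0z R) e2b.
Qed.

Lemma Uapp_shear (v w w' d : int * int) (U U' : 'M[int]_2) :
  unimodular v w -> unimodular v w' ->
  U = (invmx (Tmat v w))^T -> U' = (invmx (Tmat v w'))^T ->
  in_cone v w (embZ R d) -> in_cone v w' (embZ R d) ->
  Uapp U' d = shear (Uapp U' w).1 (Uapp U d).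
Proof.
move=> uw uw' eU eU' cw cw'.
have hd := Uapp_coords d uw eU; have hw := Uapp_coords w uw' eU'.
move: (Uapp U d) (Uapp U' w) hd hw => [e1 e2] [p r] /= hd hw.
have hd' : d = lincomb (e1 + p * e2) (e2 * r) v w'.
  by rewrite hd {1}hw /lincomb /=; congr pair; ring.
have r_unit : r = 1 \/ r = -1.
  have hdet : det2 v w = r * det2 v w' by rewrite {1}hw /det2 /lincomb /=; ring.
  by move: uw uw' hdet; rewrite /unimodular => -[->|->] [->|->]; lia.
have e2_ge0 := cone_coord_ge0 uw hd cw.
have e2r_ge0 := cone_coord_ge0 uw' hd' cw'.
rewrite (Uapp_coordsE uw' eU' hd') /shear /=; congr pair.
by case: r_unit e2r_ge0 => -> ?; lia.
Qed.

Lemma face_dir (P : R * R -> Prop) alpha x u t :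
  face P alpha x -> face P alpha (x.1 + t * u.1, x.2 + t * u.2) -> 0 < t ->
  dot alpha u = 0.
Proof.
move=> [Px hx] [Py hy] t0.
have := hx _ Py; have := hy _ Px; rewrite /dot /= => h1 h2.
have : t * (alpha.1 * u.1 + alpha.2 * u.2) = 0 by lra.
by move/eqP; rewrite mulf_eq0 gt_eqF //= => /eqP.
Qed.

Lemma orthogonal_det0 (alpha u u' : R * R) : alpha != (0, 0) ->
  dot alpha u = 0 -> dot alpha u' = 0 -> det2 u u' = 0.
Proof.
move=> ha h1 h2; apply/eqP; apply: contraNT ha => hd.
have hd' : det2 (u.1, u'.1) (u.2, u'.2) != 0 by rewrite /det2 /= -[_ * u.2]mulrC.
have hl : lincomb alpha.1 alpha.2 (u.1, u'.1) (u.2, u'.2) = lincomb 0 0 (u.1, u'.1) (u.2, u'.2).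
  by move: h1 h2; rewrite /lincomb /dot /= => -> ->; rewrite !mul0r addr0.
have [a1 a2] := coords_unique hd' hl.
by rewrite [alpha]surjective_pairing a1 a2.
Qed.

Lemma vertex_dir (G : R * R -> Prop) x u t s :
  is_vertex G x -> G (x.1 + t * u.1, x.2 + t * u.2) ->
  G (x.1 + s * u.1, x.2 + s * u.2) -> 0 < t -> s < 0 -> u = (0, 0).
Proof.
move=> [_ hv] Gy Gz t0 s0.
have ts : t - s != 0 by rewrite gt_eqF // subr_gt0 (lt_trans s0 t0).
pose l := - s / (t - s).
have l01 : 0 < l < 1.
  by rewrite /l divr_gt0 ?ltr_pdivrMr /=; lra.
have hl : l * t + (1 - l) * s = 0 by rewrite /l; field.
have mid (c d : R) : c = l * (c + t * d) + (1 - l) * (c + s * d).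
  by transitivity (c + (l * t + (1 - l) * s) * d); [rewrite hl mul0r addr0 | ring].
have [/addrI e1 /addrI e2] : (x.1 + t * u.1, x.2 + t * u.2) = (x.1 + s * u.1, x.2 + s * u.2).
  apply: (hv _ _ l Gy Gz l01); rewrite [x in LHS]surjective_pairing.
  by congr pair; rewrite /= -!mid.
have u_eq0 (c : R) : t * c = s * c -> c = 0.
  by move=> /eqP; rewrite -subr_eq0 -mulrBl mulf_eq0 (negbTE ts) => /eqP.
by rewrite [u]surjective_pairing (u_eq0 _ e1) (u_eq0 _ e2).
Qed.

(* The primitive vector v pointing from the vertex a1 into the face Gamma is
   unique: any other such v' is parallel to v, hence v' = c v with |c| = 1
   by primitivity, and c = -1 would put a1 inside a segment of Gamma. *)
Lemma edge_direction_unique (A : R * R -> Prop) alpha (a1 : nat * nat)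
    (v w v' : int * int) (t t' : R) :
  alpha != (0, 0) -> is_vertex (face A alpha) (emb R a1) ->
  gcdz v.1 v.2 = 1 -> gcdz v'.1 v'.2 = 1 -> unimodular v w ->
  0 < t -> face A alpha ((emb R a1).1 + t * (embZ R v).1, (emb R a1).2 + t * (embZ R v).2) ->
  0 < t' -> face A alpha ((emb R a1).1 + t' * (embZ R v').1, (emb R a1).2 + t' * (embZ R v').2) ->
  v' = v.
Proof.
move=> alpha0 hv gv gv' uw t0 fv t0' fv'.
have det0 : det2 v v' = 0.
  apply/eqP; rewrite -(intr_eq0 R) -det2_embZ; apply/eqP.
  exact: orthogonal_det0 alpha0 (face_dir hv.1 fv t0) (face_dir hv.1 fv' t0').
have := Uapp_coords v' uw (erefl _).
move: (Uapp _ v') => [c e] /= hv'.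
have e0 : e = 0.
  have : e * det2 v w = det2 v v' by rewrite hv' /det2 /lincomb /=; ring.
  by rewrite det0 => /eqP; rewrite mulf_eq0 (negbTE (unimodular_neq0 uw)) orbF => /eqP.
have {}hv' : v' = (c * v.1, c * v.2) by rewrite hv' e0 /lincomb !mul0r !addr0.
have c_unit : `|c|%N = 1%N by move: gv'; rewrite hv' /= -mulz_gcdr gv; lia.
have [c1|cN1] : c = 1 \/ c = -1 by lia.
  by rewrite hv' c1 !mul1r -surjective_pairing.
have : embZ R v = (0, 0).
  apply: (vertex_dir hv fv _ t0 (s := - t')); last by rewrite oppr_lt0.
  by move: fv'; rewrite hv' cN1 /embZ /= !mulN1r !rmorphN /= !mulrN -!mulNr.
rewrite /embZ => -[/eqP + /eqP]; rewrite !intr_eq0 => /eqP v1 /eqP v2.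
by move: gv; rewrite v1 v2.
Qed.
End Geometry.

Definition expo (g : nat * nat) (i j : nat) : int * int := (i%:Z - g.1%:Z, j%:Z - g.2%:Z).

Section Monomials.
Variable K : numFieldType.

Definition shear_pt (k : int) (z : K * K) : K * K := (z.1, z.2 * z.1 ^ k).

Lemma coef_sub_const (p : {poly {poly K}}) (y : K) (i j : nat) :
  coef2 p (0%N, 0%N) != 0 -> (p - (y%:P)%:P)`_j`_i != 0 -> coef2 p (i, j) != 0.
Proof.
rewrite /coef2 /= !coefB !coefC; case: j => [|j] /=; last by rewrite coef0 subr0.
by rewrite coefC; case: i => [|i] //=; rewrite subr0.
Qed.

Lemma monomial_shear (k : int) (e : int * int) (z : K * K) : z.1 != 0 ->
  z.1 ^ (shear k e).1 * z.2 ^ (shear k e).2 =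
  (shear_pt k z).1 ^ e.1 * (shear_pt k z).2 ^ e.2.
Proof.
move=> z0; rewrite /= expfzDr // expfzMl exprz_exp.
by rewrite -mulrA [z.2 ^ _ * _]mulrC.
Qed.

Lemma Ubar_shear (U U' : 'M[int]_2) (g : nat * nat) (p : {poly {poly K}}) (y : K)
    (k : int) (z : K * K) :
  z.1 != 0 -> coef2 p (0%N, 0%N) != 0 ->
  (forall i j : nat, coef2 p (i, j) != 0 ->
     Uapp U' (expo g i j) = shear k (Uapp U (expo g i j))) ->
  Ubar_eval U' g p y z = Ubar_eval U g p y (shear_pt k z).
Proof.
move=> z0 c0 hrel; rewrite /Ubar_eval; apply: eq_bigr => j _; apply: eq_bigr => i _.
have [->|hq] := eqVneq (p - (y%:P)%:P)`_j`_i 0; first by rewrite !mul0r.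
by congr (_ * _); rewrite (hrel _ _ (coef_sub_const c0 hq)); apply: monomial_shear.
Qed.
End Monomials.

Section Convergence.
Variable K : numFieldType.

Lemma cvgK_norm_bounds (u : nat -> K) (rho : K) : rho != 0 -> cvgK u rho ->
  exists N, forall n, (N <= n)%N -> `|rho| / 2 <= `|u n| <= `|rho| * 2.
Proof.
move=> r0 cu; have r_gt0 : 0 < `|rho| by rewrite normr_gt0.
have [N hN] := cu (`|rho| / 2) (divr_gt0 r_gt0 (ltr0Sn _ 1)).
exists N => n /hN /ltW close; apply/andP; split.
  have := lerB_dist rho (u n); rewrite distrC => h.
  have := le_trans h close; rewrite lerBlDr => h'.
  by rewrite -(lerD2l (`|rho| / 2)) -splitr.
have := ler_distD rho (u n) 0; rewrite !subr0 => /le_trans; apply.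
rewrite mulrDr mulr1 lerD2r; apply: (le_trans close).
by rewrite ler_pdivrMr ?(ltr0Sn _ 1) // ler_peMr ?ler1n // ltW.
Qed.

Lemma cvgK_pow_bounded (u : nat -> K) (rho : K) (m : int) : rho != 0 -> cvgK u rho ->
  exists2 C : K, 0 < C & exists N, forall n, (N <= n)%N -> `|u n ^ m| <= C.
Proof.
move=> r0 cu; have r_gt0 : 0 < `|rho| by rewrite normr_gt0.
have [N hN] := cvgK_norm_bounds r0 cu.
case: m => a.
- exists ((`|rho| * 2) ^+ a); first by rewrite exprn_gt0 // mulr_gt0.
  exists N => n /hN /andP[_ hi]; rewrite -exprnP normrX.
  by apply: lerXn2r hi; rewrite qualifE /= ?normr_ge0 // mulr_ge0 // ler0n.
- have half_gt0 : 0 < `|rho| / 2 by rewrite divr_gt0.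
  exists (((`|rho| / 2) ^+ a.+1)^-1); first by rewrite invr_gt0 exprn_gt0.
  exists N => n /hN /andP[lo _]; rewrite NegzE -exprnN normfV normrX.
  rewrite lef_pV2 ?qualifE /= ?exprn_gt0 ?(lt_le_trans half_gt0 lo) //.
  by apply: lerXn2r lo; rewrite qualifE /= ?normr_ge0 ?ltW.
Qed.

(* Continuity of the second component of shear_pt at (rho, 0). *)
Lemma cvgK_mul_pow (u w : nat -> K) (rho : K) (m : int) :
  rho != 0 -> cvgK u rho -> cvgK w 0 -> cvgK (fun n => w n * u n ^ m) 0.
Proof.
move=> r0 cu cw e e_gt0.
have [C C_gt0 [N0 hC]] := cvgK_pow_bounded m r0 cu.
have [N1 hN1] := cw (e / C) (divr_gt0 e_gt0 C_gt0).
exists (maxn N0 N1) => n; rewrite geq_max => /andP[n0 n1].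
have := hN1 n n1; rewrite !subr0 normrM => hw.
apply: (le_lt_trans (ler_wpM2l (normr_ge0 _) (hC n n0))).
by rewrite -ltr_pdivlMr.
Qed.
End Convergence.

Section Transfer.
Variables (K : numFieldType) (U U' : 'M[int]_2) (g1 g2 : nat * nat).
Variables (f1 f2 : {poly {poly K}}) (k : int).
Hypothesis Ubar_change : forall y z : K * K, z.1 != 0 ->
  Ubar_eval U' g1 f1 y.1 z = Ubar_eval U g1 f1 y.1 (shear_pt k z) /\
  Ubar_eval U' g2 f2 y.2 z = Ubar_eval U g2 f2 y.2 (shear_pt k z).

Lemma zero_transfer (y z : K * K) : z.1 != 0 ->
  Ubar_zero U' g1 g2 f1 f2 y z -> Ubar_zero U g1 g2 f1 f2 y (shear_pt k z).
Proof. by move=> z0 [h1 h2]; have [e1 e2] := Ubar_change y z0; rewrite /Ubar_zero -e1 -e2. Qed.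

Lemma zero_transfer_axis (y : K * K) (rho : K) : rho != 0 ->
  Ubar_zero U' g1 g2 f1 f2 y (rho, 0) -> Ubar_zero U g1 g2 f1 f2 y (rho, 0).
Proof. by move=> r0 /(@zero_transfer y (rho, 0) r0); rewrite /shear_pt /= mul0r. Qed.

(* Therefore TF computed with U' is contained in TF computed with U: approximating
   sequences of zeros are carried along by shear_pt k. *)
Lemma TF_transfer (y : K * K) : TF U' g1 g2 f1 f2 y -> TF U g1 g2 f1 f2 y.
Proof.
move=> [rho [[r0 [yt hyt]] hTF]]; exists rho.
split; first by split=> //; exists yt; exact: zero_transfer_axis.
move=> e e_gt0; have [s [[hs [vr [ys [vr_nz [cvg1 [cvg2 [cvg3 [cvg4 hv]]]]]]]] hd]] := hTF e e_gt0.
exists s; split=> //; split; first exact: zero_transfer_axis.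
exists (fun n => shear_pt k (vr n)), ys; split.
  by move=> n; have [a b] := vr_nz n; rewrite /= mulf_neq0 ?expfz_neq0.
split; first exact: cvg1.
split; first exact: (cvgK_mul_pow (u := fun n => (vr n).1) k r0 cvg1 cvg2).
do 2 (split; first by []).
by move=> n; apply: zero_transfer; [exact: (vr_nz n).1 | exact: hv].
Qed.
End Transfer.

Section Exponents.
Variables (R : realType) (K : numFieldType).

Lemma NP_support (p : {poly {poly K}}) (a : nat * nat) :
  coef2 p a != 0 -> NP p (emb R a).
Proof.
move=> h; exists 1%N, (fun _ => 1), (fun _ => emb R a).
do 2 (split; first by [|rewrite big_ord1]); split; first by exists a.
by rewrite !big_ord1 !mul1r -surjective_pairing.
Qed.

Lemma embZ_expo (g g' a1 : nat * nat) (i j : nat) : (g.1 + g'.1, g.2 + g'.2)%N = a1 ->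
  embZ R (expo g i j) =
  (i%:R + (emb R g').1 - (emb R a1).1, j%:R + (emb R g').2 - (emb R a1).2).
Proof. by move=> <-; rewrite /embZ /emb /= !natrD !rmorphB /=; congr pair; ring. Qed.

Lemma exponents_in_cone (f1 f2 : {poly {poly K}}) (a1 g1 g2 : nat * nat) (v w : int * int) :
  (forall x, msum (NP f1) (NP f2) x ->
     in_cone v w (x.1 - (emb R a1).1, x.2 - (emb R a1).2)) ->
  NP f1 (emb R g1) -> NP f2 (emb R g2) -> (g1.1 + g2.1, g1.2 + g2.2)%N = a1 ->
  (forall i j, coef2 f1 (i, j) != 0 -> in_cone v w (embZ R (expo g1 i j))) /\
  (forall i j, coef2 f2 (i, j) != 0 -> in_cone v w (embZ R (expo g2 i j))).
Proof.
move=> cone NPg1 NPg2 ea; split=> i j hc.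
  rewrite (embZ_expo _ _ ea); apply: (cone (i%:R + (emb R g2).1, j%:R + (emb R g2).2)).
  by exists (emb R (i, j)), (emb R g2); split; [exact: NP_support|split].
have ea' : (g2.1 + g1.1, g2.2 + g1.2)%N = a1 by rewrite addnC [(g2.2 + _)%N]addnC.
rewrite (embZ_expo _ _ ea'); apply: (cone (i%:R + (emb R g1).1, j%:R + (emb R g1).2)).
exists (emb R g1), (emb R (i, j)); do 2 (split; first by [|exact: NP_support]).
by rewrite /= (addrC (i%:R)) (addrC (j%:R)).
Qed.
End Exponents.

Theorem lemma4p2 (R : realType) (isC : bool)
  (f1 f2 : {poly {poly Kfield R isC}}) (alpha : R * R)
  (a1 g1 g2 : nat * nat) (U U' : 'M[int]_2) :
  let A := msum (NP f1) (NP f2) in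
  let Gamma := face A alpha in
  let Gamma1 := face (NP f1) alpha in
  let Gamma2 := face (NP f2) alpha in
  dominant f1 f2 ->
  coef2 f1 (0%N, 0%N) != 0 -> coef2 f2 (0%N, 0%N) != 0 ->
  is_edge A alpha ->
  (* a1 : a vertex of Gamma of minimal Euclidean norm *)
  is_vertex Gamma (emb R a1) ->
  (forall b, is_vertex Gamma b -> norm2 (emb R a1) <= norm2 b) ->
  (* gamma_i : vertices of Gamma_i with gamma_1 + gamma_2 = a1 *)
  is_vertex Gamma1 (emb R g1) -> is_vertex Gamma2 (emb R g2) ->
  (g1.1 + g2.1, g1.2 + g2.2)%N = a1 ->
  TGamma A Gamma a1 U -> TGamma A Gamma a1 U' ->
  forall y : Kfield R isC * Kfield R isC,
    TF U g1 g2 f1 f2 y <-> TF U' g1 g2 f1 f2 y.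
Proof.
move=> A Gamma Gamma1 Gamma2 _ c1 c2 [alpha0 _] hv _ [[NPg1 _] _] [[NPg2 _] _] ea.
move=> [v [w [gv [[t [t0 Gt]] [uw [cone eU]]]]]].
move=> [v' [w' [gv' [[t' [t0' Gt']] [uw' [cone' eU']]]]]].
have ev : v' = v := edge_direction_unique alpha0 hv gv gv' uw t0 Gt t0' Gt'.
subst v'.
have [in1 in2] := exponents_in_cone cone NPg1 NPg2 ea.
have [in1' in2'] := exponents_in_cone cone' NPg1 NPg2 ea.
move=> y; split; apply: TF_transfer => y0 z z0.
- by split; apply: Ubar_shear => // i j hij; apply: (Uapp_shear uw' uw eU' eU); auto.
- by split; apply: Ubar_shear => // i j hij; apply: (Uapp_shear uw uw' eU eU'); auto.
Qed.
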